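(* For every $w\in[0,1]$ (with $0\log 0=0$), $$g(w)=1-\sum_{n\ge1}\frac{(n-1)^{n-1}}{n!}\bigl(-w\log w\bigr)^n$$ and $$\log g(w)=\sum_{n\ge1}\frac{(-n)^{n-1}}{n!}\bigl(w\log w\bigr)^n=W_0(w\log w),$$ the series converging absolutely; here $0^0=1$. In particular $g(w)=f(w)$ for $0\le w\le 1/e$ and $g(w)=w$ (so $W_0(w\log w)=\log w$) for $1/e\le w\le1$.
   Context: Let $\phi(x)=-x\log x$ on $[0,1]$ (with $\phi(0)=0$); it is strictly increasing on $[0,1/e]$ and strictly decreasing on $[1/e,1]$. Let $l,r$ be its restrictions to $[0,1/e]$ and $[1/e,1]$. Define $f(x)=r^{-1}(\phi(x))$ for $0\le x\le 1/e$, $f(x)=l^{-1}(\phi(x))$ for $1/e\le x\le1$, and $g(x)=r^{-1}(\phi(x))$ for $0\le x\le1$. $W_0$ denotes the principal branch of the Lambert $W$ function (the inverse of $u\mapsto ue^u$ on $[-1,\infty)$), defined on $[-1/e,\infty)$. *)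

From Stdlib Require Import Reals Lra ClassicalEpsilon.
From Coquelicot Require Import Coquelicot.
Open Scope R_scope.

(* phi(x) = -x log x ; for x = 0 this is 0 (0 * ln 0 = 0 in Stdlib). *)
Definition phi (x : R) : R := - x * ln x.

Definition inv_on (a b : R) (h : R -> R) (y : R) : R :=
  epsilon (inhabits 0) (fun x => a <= x <= b /\ h x = y).

Definition l_inv (y : R) : R := inv_on 0 (/ exp 1) phi y.
Definition r_inv (y : R) : R := inv_on (/ exp 1) 1 phi y.

Definition f (x : R) : R :=
  if Rle_dec x (/ exp 1) then r_inv (phi x) else l_inv (phi x).
Definition g (x : R) : R := r_inv (phi x).

Definition W0 (y : R) : R :=
  epsilon (inhabits 0) (fun u => -1 <= u /\ u * exp u = y).

(* The two series, indexed by k = n - 1 >= 0 (n >= 1). Note 0^0 = 1 in Stdlib. *)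
Definition term_g (w : R) (k : nat) : R :=
  let n := S k in (INR (n - 1)) ^ (n - 1) / INR (Factorial.fact n) * (phi w) ^ n.
Definition term_logg (w : R) (k : nat) : R :=
  let n := S k in (- INR n) ^ (n - 1) / INR (Factorial.fact n) * (w * ln w) ^ n.

(* With [y = -w log w] in [[0, 1/e]] and the tree function [T y = sum_{n>=1} n^(n-1) y^n / n!],
   Abel's identity gives a recursion for the coefficients of [E = T / y] which amounts to the
   differential equation [E' = E^2 + y E E'].  Hence [E e^{-y E}] is constant, i.e. [T e^{-T} = y],
   and similarly the first series equals [1 - e^{-T}], on [|y| < 1/e].  Since [T 0 = 0] and [T] is
   continuous, [T < 1] on [[0, 1/e)]; as the coefficients are nonnegative this passes to the
   endpoint, where [T (1/e) = 1].  So [s = T y] is the root in [[0, 1]] of [s e^{-s} = y]: then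
   [e^{-s}] is the root in [[1/e, 1]] of [phi = y], which is [g w], its logarithm [-s] is the second
   series, and [W0 (w log w) = W0 (-y) = -s]. *)

From Pilot Require Import Defs.
From Stdlib Require Import Reals Lra Lia ClassicalEpsilon Factorial.
From Coquelicot Require Import Coquelicot.
Open Scope R_scope.

(** * Abel's identity *)

(* [fin_diff M c i] is the [M]-th forward difference of [t ^ i] at [c], divided by [M!]. *)
Definition fin_diff (M : nat) (c : R) (i : nat) : R :=
  sum_f_R0 (fun k => (-1) ^ (M - k) * (c + INR k) ^ i / (INR (fact k) * INR (fact (M - k)))) M.

Lemma fin_diff_pow0 M c : fin_diff (S M) c 0 = 0.
Proof.
  pose proof (binomial 1 (-1) (S M)) as Hbin.
  replace (1 + -1) with 0 in Hbin by ring.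
  rewrite pow_i in Hbin by lia.
  transitivity (/ INR (fact (S M)) *
    sum_f_R0 (fun i => Binomial.C (S M) i * 1 ^ i * (-1) ^ (S M - i)) (S M)).
  - rewrite scal_sum. apply sum_eq. intros i _.
    unfold Binomial.C. rewrite pow1. simpl pow at 2.
    field; repeat split; apply INR_fact_neq_0.
  - rewrite <- Hbin. ring.
Qed.

Lemma fin_diff_powS M c i :
  fin_diff (S M) c (S i) = c * fin_diff (S M) c i + fin_diff M (c + 1) i.
Proof.
  unfold fin_diff.
  transitivity (sum_f_R0 (fun k =>
      (-1) ^ (S M - k) * (c + INR k) ^ i / (INR (fact k) * INR (fact (S M - k))) * c
    + (-1) ^ (S M - k) * INR k * (c + INR k) ^ i / (INR (fact k) * INR (fact (S M - k)))) (S M)).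
  { apply sum_eq. intros k _. simpl pow. field; split; apply INR_fact_neq_0. }
  rewrite sum_plus, <- scal_sum. f_equal.
  rewrite decomp_sum by lia. simpl pred. simpl INR at 1.
  rewrite Rmult_0_r, Rmult_0_l. unfold Rdiv at 1. rewrite Rmult_0_l, Rplus_0_l.
  apply sum_eq. intros k Hk.
  replace (S M - S k)%nat with (M - k)%nat by lia.
  rewrite fact_simpl, mult_INR, S_INR.
  replace (c + (INR k + 1)) with (c + 1 + INR k) by ring.
  pose proof (pos_INR k).
  field; repeat split; try apply INR_fact_neq_0; lra.
Qed.

Lemma fin_diff_pow_lt M i c : (i < M)%nat -> fin_diff M c i = 0.
Proof.
  revert i c. induction M as [|M IH]; intros i c Hi; [lia|].
  revert c. induction i as [|i IHi]; intros c.
  - apply fin_diff_pow0.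
  - rewrite fin_diff_powS, IHi, IH by lia. ring.
Qed.

Definition tree_coef (k : nat) : R := INR (S k) ^ k / INR (fact (S k)).

Definition abel_poly (z : R) (m : nat) : R := (z + INR m) ^ m / INR (fact m).

Definition abel_conv (n : nat) (z : R) : R :=
  sum_f_R0 (fun k => tree_coef k * abel_poly z (n - k)) n.

Lemma is_derive_abel_poly a m z :
  is_derive (fun t => abel_poly (t + a) (S m)) z (abel_poly (z + a + 1) m).
Proof.
  unfold abel_poly. auto_derive; [easy|].
  change (match m with 0%nat => 1 | S _ => INR m + 1 end) with (INR (S m)).
  change (fact m + m * fact m)%nat with (fact (S m)).
  rewrite fact_simpl, mult_INR, !S_INR.
  replace (z + a + (INR m + 1)) with (z + a + 1 + INR m) by ring.
  pose proof (pos_INR m).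
  field; split; [apply INR_fact_neq_0 | lra].
Qed.

Lemma is_derive_sum_f_R0 (f : nat -> R -> R) (df : nat -> R) n z :
  (forall k, (k <= n)%nat -> is_derive (f k) z (df k)) ->
  is_derive (fun t => sum_f_R0 (fun k => f k t) n) z (sum_f_R0 df n).
Proof.
  induction n as [|n IH]; intros Hf; simpl.
  - apply Hf. lia.
  - apply (is_derive_plus (fun t => sum_f_R0 (fun k => f k t) n) (f (S n))).
    + apply IH. intros k Hk. apply Hf. lia.
    + apply Hf. lia.
Qed.

Lemma is_derive_abel_conv n z : is_derive (abel_conv (S n)) z (abel_conv n (z + 1)).
Proof.
  unfold abel_conv. simpl sum_f_R0 at 1.
  rewrite <- (Rplus_0_r (sum_f_R0 _ n)).
  apply (is_derive_plus (fun t => sum_f_R0 (fun k => tree_coef k * abel_poly t (S n - k)) n)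
           (fun t => tree_coef (S n) * abel_poly t (S n - S n))).
  - apply (is_derive_sum_f_R0 (fun k t => tree_coef k * abel_poly t (S n - k))).
    intros k Hk. apply is_derive_scal.
    apply (is_derive_ext (fun t => abel_poly (t + 0) (S (n - k)))).
    { intros t. rewrite Rplus_0_r. f_equal. lia. }
    rewrite <- (Rplus_0_r z) at 2. apply is_derive_abel_poly.
  - rewrite Nat.sub_diag. unfold abel_poly. auto_derive; [easy | ring].
Qed.

(* At [z = -(n+2)] the convolution is an [(n+1)]-th difference of a polynomial of degree [n]. *)
Lemma abel_conv_root n : abel_conv (S n) (- (INR n + 2)) = 0.
Proof.
  rewrite <- (fin_diff_pow_lt (S n) n 1) by lia.
  apply sum_eq. intros k Hk. unfold tree_coef, abel_poly.
  replace (- (INR n + 2) + INR (S n - k)) with (-1 * INR (S k))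
    by (rewrite minus_INR by lia; rewrite !S_INR; ring).
  replace (1 + INR k) with (INR (S k)) by (rewrite S_INR; ring).
  rewrite Rpow_mult_distr.
  assert (Hpow : INR (S k) ^ k * INR (S k) ^ (S n - k) = INR (S k) * INR (S k) ^ n).
  { rewrite <- pow_add. replace (k + (S n - k))%nat with (S n) by lia. reflexivity. }
  transitivity ((-1) ^ (S n - k) * (INR (S k) ^ k * INR (S k) ^ (S n - k)) /
                (INR (fact (S k)) * INR (fact (S n - k)))).
  { field; split; apply INR_fact_neq_0. }
  rewrite Hpow, (fact_simpl k), mult_INR.
  pose proof (pos_INR k). rewrite S_INR.
  field; repeat split; try apply INR_fact_neq_0; lra.
Qed.

(* Both sides have derivative [abel_conv n (z + 1)] by induction, and they agree at
   [z = -(n+2)], where the right-hand side vanishes. *)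
Lemma abel_identity n z : abel_conv n z = abel_poly (z + 1) n.
Proof.
  revert z. induction n as [|n IH]; intros z.
  { unfold abel_conv, abel_poly, tree_coef. simpl. field. }
  set (z0 := - (INR n + 2)).
  set (h := fun t => abel_conv (S n) t - abel_poly (t + 1) (S n)).
  assert (Hh : forall t, is_derive h t zero).
  { intros t. replace (@zero R_NormedModule) with (abel_conv n (t + 1) - abel_poly (t + 1 + 1) n)
      by (rewrite IH; unfold zero; simpl; ring).
    apply (is_derive_minus (abel_conv (S n)) (fun t => abel_poly (t + 1) (S n))).
    - apply is_derive_abel_conv.
    - apply is_derive_abel_poly. }
  assert (Hz0 : h z0 = 0).
  { unfold h. rewrite abel_conv_root. unfold abel_poly.
    replace (z0 + 1 + INR (S n)) with 0 by (unfold z0; rewrite S_INR; ring).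
    rewrite pow_i by lia. unfold Rdiv. ring. }
  enough (h z = h z0) by (unfold h in *; lra).
  destruct (Rtotal_order z z0) as [Hlt | [Heq | Hgt]].
  - exact (eq_is_derive h z z0 (fun t _ => Hh t) Hlt).
  - now rewrite Heq.
  - symmetry. exact (eq_is_derive h z0 z (fun t _ => Hh t) Hgt).
Qed.

Lemma abel_poly_1 m : abel_poly 1 m = INR (S m) * tree_coef m.
Proof.
  unfold abel_poly, tree_coef. rewrite fact_simpl, mult_INR, S_INR.
  replace (1 + INR m) with (INR m + 1) by ring.
  pose proof (pos_INR m).
  field; split; [apply INR_fact_neq_0 | lra].
Qed.

(* Abel's identity at [z = 1], read as a recursion on the coefficients. *)
Lemma tree_coef_rec n :
  PS_derive tree_coef n =
  PS_mult tree_coef tree_coef n + PS_incr_1 (PS_mult tree_coef (PS_derive tree_coef)) n.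
Proof.
  assert (Hl : PS_derive tree_coef n = abel_poly (1 + 1) n).
  { unfold PS_derive, tree_coef, abel_poly.
    rewrite (fact_simpl (S n)), (fact_simpl n), !mult_INR, !S_INR.
    replace (INR n + 1 + 1) with (1 + 1 + INR n) by ring.
    pose proof (pos_INR n). simpl pow at 1.
    field; repeat split; try apply INR_fact_neq_0; lra. }
  rewrite Hl, <- abel_identity. unfold abel_conv, PS_mult.
  destruct n as [|m].
  - simpl. rewrite abel_poly_1. unfold zero. simpl. ring.
  - simpl PS_incr_1. rewrite !tech5, Nat.sub_diag, abel_poly_1.
    transitivity (sum_f_R0 (fun k => tree_coef k * tree_coef (S m - k)
                    + tree_coef k * PS_derive tree_coef (m - k)) m + tree_coef (S m) * tree_coef 0).
    2:{ rewrite sum_plus. ring. }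
    f_equal.
    + apply sum_eq. intros k Hk. rewrite abel_poly_1.
      replace (S m - k)%nat with (S (m - k)) by lia.
      unfold PS_derive. rewrite (S_INR (S (m - k))). ring.
    + simpl INR. ring.
Qed.

(** * The tree function as a power series *)

Lemma INR_pow_div_fact_ge0 m k j : 0 <= INR m ^ k / INR (fact j).
Proof. apply Rdiv_le_0_compat; [apply pow_le, pos_INR | apply lt_0_INR, lt_O_fact]. Qed.

Lemma exp_INR n : exp (INR n) = exp 1 ^ n.
Proof.
  induction n as [|n IH]; [apply exp_0|].
  rewrite S_INR, exp_plus, IH. simpl. ring.
Qed.

Lemma INR_pow_div_fact_le n : INR n ^ n / INR (fact n) <= exp 1 ^ n.
Proof.
  rewrite <- exp_INR.
  pose proof (exp_ge_taylor (INR n) n (pos_INR n)) as Htaylor.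
  destruct n as [|n]; [simpl in *; lra|].
  rewrite tech5 in Htaylor.
  assert (0 <= sum_f_R0 (fun k => INR (S n) ^ k / INR (fact k)) n)
    by (apply cond_pos_sum; intros k; apply INR_pow_div_fact_ge0).
  lra.
Qed.



Lemma CV_radius_ge_inv_e (a : nat -> R) :
  (forall n, Rabs (a n) <= exp 1 ^ S n) -> Rbar_le (/ exp 1) (CV_radius a).
Proof.
  intros Ha. apply (proj1 (CV_radius_bounded a)). exists (exp 1). intros n.
  assert (He : 0 < exp 1) by apply exp_pos.
  rewrite Rabs_mult, (Rabs_pos_eq (_ ^ n)) by (apply pow_le; left; apply Rinv_0_lt_compat, He).
  apply (Rmult_le_reg_r (exp 1 ^ n)); [apply pow_lt, He|].
  rewrite Rmult_assoc, <- Rpow_mult_distr, Rinv_l, pow1, Rmult_1_r by lra.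
  apply Ha.
Qed.

Lemma Rabs_lt_CV_radius (a : nat -> R) y :
  (forall n, Rabs (a n) <= exp 1 ^ S n) -> Rabs y < / exp 1 -> Rbar_lt (Rabs y) (CV_radius a).
Proof.
  intros Ha Hy. eapply Rbar_lt_le_trans; [|apply CV_radius_ge_inv_e, Ha]. exact Hy.
Qed.

Lemma PS_incr_1_exp_bound (a : nat -> R) :
  (forall n, Rabs (a n) <= exp 1 ^ S n) -> forall n, Rabs (PS_incr_1 a n) <= exp 1 ^ S n.
Proof.
  assert (He : 1 <= exp 1) by (pose proof (exp_ineq1_le 1); lra).
  intros Ha [|n]; simpl PS_incr_1.
  - change (Rabs 0 <= exp 1 ^ 1). rewrite Rabs_R0. apply pow_le. lra.
  - eapply Rle_trans; [apply Ha|]. apply Rle_pow; [lra | lia].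
Qed.

Lemma tree_coef_exp_bound n : Rabs (tree_coef n) <= exp 1 ^ S n.
Proof.
  rewrite Rabs_pos_eq by apply INR_pow_div_fact_ge0.
  eapply Rle_trans; [|apply INR_pow_div_fact_le].
  unfold tree_coef, Rdiv. apply Rmult_le_compat_r.
  - left. apply Rinv_0_lt_compat, lt_0_INR, lt_O_fact.
  - change (INR (S n) ^ S n) with (INR (S n) * INR (S n) ^ n).
    rewrite <- (Rmult_1_l (INR (S n) ^ n)) at 1.
    apply Rmult_le_compat_r; [apply pow_le, pos_INR|].
    rewrite S_INR. pose proof (pos_INR n). lra.
Qed.

Definition tree_quot (y : R) : R := PSeries tree_coef y.
Definition tree (y : R) : R := PSeries (PS_incr_1 tree_coef) y.

Lemma tree_eq y : tree y = y * tree_quot y.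
Proof. apply PSeries_incr_1. Qed.

Section OnDisk.

Variable y : R.
Hypothesis Hy : Rabs y < / exp 1.

Lemma tree_coef_radius : Rbar_lt (Rabs y) (CV_radius tree_coef).
Proof. apply Rabs_lt_CV_radius; [apply tree_coef_exp_bound | exact Hy]. Qed.

Lemma tree_coef_derive_radius : Rbar_lt (Rabs y) (CV_radius (PS_derive tree_coef)).
Proof. rewrite CV_radius_derive. apply tree_coef_radius. Qed.

Lemma tree_radius : Rbar_lt (Rabs y) (CV_radius (PS_incr_1 tree_coef)).
Proof.
  apply Rabs_lt_CV_radius; [apply PS_incr_1_exp_bound, tree_coef_exp_bound | exact Hy].
Qed.

Lemma is_derive_tree_quot : is_derive tree_quot y (PSeries (PS_derive tree_coef) y).
Proof. apply is_derive_PSeries, tree_coef_radius. Qed.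

Lemma tree_quot_ode :
  PSeries (PS_derive tree_coef) y =
  tree_quot y * tree_quot y + y * (tree_quot y * PSeries (PS_derive tree_coef) y).
Proof.
  pose proof tree_coef_radius. pose proof tree_coef_derive_radius.
  unfold tree_quot. rewrite <- !PSeries_mult by easy. rewrite <- PSeries_incr_1.
  rewrite <- PSeries_plus.
  - apply PSeries_ext, tree_coef_rec.
  - apply ex_pseries_mult; easy.
  - apply ex_pseries_incr_1, ex_pseries_mult; easy.
Qed.

End OnDisk.

Lemma is_derive_zero_const (h : R -> R) r y :
  (forall t, Rabs t < r -> is_derive h t 0) -> Rabs y < r -> h y = h 0.
Proof.
  intros Hd Hy.
  destruct (Rtotal_order y 0) as [Hlt | [-> | Hgt]]; [| reflexivity |].
  - apply (eq_is_derive h y 0); [|exact Hlt]. intros t Ht. apply Hd.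
    apply Rabs_def1; apply Rabs_def2 in Hy; lra.
  - symmetry. apply (eq_is_derive h 0 y); [|exact Hgt]. intros t Ht. apply Hd.
    apply Rabs_def1; apply Rabs_def2 in Hy; lra.
Qed.

(* [T e^{-T} = y] in the form [E e^{-y E} = 1]: its derivative vanishes by the ODE. *)
Lemma tree_quot_mul_exp y : Rabs y < / exp 1 -> tree_quot y * exp (- (y * tree_quot y)) = 1.
Proof.
  intros Hy.
  rewrite (is_derive_zero_const (fun t => tree_quot t * exp (- (t * tree_quot t))) (/ exp 1) y);
    [| | exact Hy].
  - rewrite Rmult_0_l, Ropp_0, exp_0. unfold tree_quot. rewrite PSeries_0.
    unfold tree_coef. simpl. field.
  - intros t Ht. pose proof (is_derive_tree_quot t Ht) as HE.
    auto_derive; [repeat split; exists (PSeries (PS_derive tree_coef) t); exact HE|].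
    change (fun x => tree_quot x) with tree_quot.
    rewrite (is_derive_unique _ _ _ HE). rewrite (tree_quot_ode t Ht) at 1. ring.
Qed.

Definition g_coef (k : nat) : R := INR k ^ k / INR (fact (S k)).
Definition g_series (y : R) : R := PSeries (PS_incr_1 g_coef) y.

Lemma g_coef_le_tree_coef n : 0 <= g_coef n <= tree_coef n.
Proof.
  split; [apply INR_pow_div_fact_ge0|].
  unfold g_coef, tree_coef, Rdiv. apply Rmult_le_compat_r.
  - left. apply Rinv_0_lt_compat, lt_0_INR, lt_O_fact.
  - apply pow_incr. rewrite S_INR. pose proof (pos_INR n). lra.
Qed.

Lemma g_coef_radius y : Rabs y < / exp 1 -> Rbar_lt (Rabs y) (CV_radius (PS_incr_1 g_coef)).
Proof.
  intros Hy. apply Rabs_lt_CV_radius; [|exact Hy].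
  apply PS_incr_1_exp_bound. intros n.
  destruct (g_coef_le_tree_coef n) as [H0 H1].
  rewrite Rabs_pos_eq by exact H0.
  eapply Rle_trans; [exact H1|]. eapply Rle_trans; [apply Rle_abs | apply tree_coef_exp_bound].
Qed.

Lemma is_derive_g_series y : Rabs y < / exp 1 ->
  is_derive g_series y (1 + y * (tree_quot y + y * PSeries (PS_derive tree_coef) y)).
Proof.
  intros Hy.
  replace (1 + _) with (PSeries (PS_derive (PS_incr_1 g_coef)) y);
    [apply is_derive_PSeries, g_coef_radius, Hy|].
  rewrite PSeries_decr_1 by apply ex_pseries_derive, g_coef_radius, Hy.
  f_equal.
  - unfold PS_derive, g_coef. simpl. field.
  - f_equal. unfold tree_quot.
    rewrite <- PSeries_incr_1, <- PSeries_plus.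
    + apply PSeries_ext. intros n. unfold PS_decr_1, PS_derive, PS_plus. simpl PS_incr_1.
      transitivity (INR (S n) * tree_coef n).
      * unfold g_coef, tree_coef. rewrite (fact_simpl (S n)), mult_INR.
        change (INR (S n) ^ S n) with (INR (S n) * INR (S n) ^ n).
        rewrite !S_INR. pose proof (pos_INR n).
        field; split; [apply INR_fact_neq_0 | lra].
      * destruct n as [|n]; simpl PS_incr_1; unfold plus, zero; simpl; ring.
    + apply CV_radius_inside, tree_coef_radius, Hy.
    + apply ex_pseries_incr_1, CV_radius_inside, tree_coef_derive_radius, Hy.
Qed.

Lemma g_series_eq y : Rabs y < / exp 1 -> g_series y = 1 - exp (- tree y).
Proof.
  intros Hy. rewrite tree_eq.
  enough (Hh : g_series y - 1 + exp (- (y * tree_quot y)) = 0) by lra.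
  rewrite (is_derive_zero_const (fun t => g_series t - 1 + exp (- (t * tree_quot t))) (/ exp 1) y);
    [| | exact Hy].
  - unfold g_series. rewrite PSeries_0, Rmult_0_l, Ropp_0, exp_0. simpl. unfold zero. simpl. ring.
  - intros t Ht. pose proof (is_derive_tree_quot t Ht) as HE.
    pose proof (is_derive_g_series t Ht) as HG.
    auto_derive; [repeat split; eexists; [exact HG | exact HE]|].
    change (fun x => tree_quot x) with tree_quot. change (fun x => g_series x) with g_series.
    rewrite (is_derive_unique _ _ _ HE), (is_derive_unique _ _ _ HG).
    set (X := exp (- (t * tree_quot t))).
    assert (HEX : tree_quot t * X = 1) by apply tree_quot_mul_exp, Ht.
    assert (HE'X : PSeries (PS_derive tree_coef) t * X
                   = tree_quot t + t * PSeries (PS_derive tree_coef) t).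
    { rewrite (tree_quot_ode t Ht) at 1.
      transitivity (tree_quot t * (tree_quot t * X)
                    + t * PSeries (PS_derive tree_coef) t * (tree_quot t * X)); [ring|].
      rewrite HEX. ring. }
    transitivity (1 - tree_quot t * X
      + t * (tree_quot t + t * PSeries (PS_derive tree_coef) t - PSeries (PS_derive tree_coef) t * X));
      [ring|].
    rewrite HEX, HE'X. ring.
Qed.

Lemma exp_le x y : x <= y -> exp x <= exp y.
Proof.
  intros Hxy. destruct (Rle_lt_or_eq_dec x y Hxy) as [Hlt | ->]; [|apply Rle_refl].
  left. apply exp_increasing, Hlt.
Qed.

Lemma ln_ge_neg1 t : / exp 1 <= t -> -1 <= ln t.
Proof.
  intros Ht. rewrite <- exp_Ropp in Ht.
  replace (-1) with (ln (exp (- (1)))) by (rewrite ln_exp; ring).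
  apply ln_le; [apply exp_pos | exact Ht].
Qed.

Lemma mul_exp_lt u v : -1 <= u -> u < v -> u * exp u < v * exp v.
Proof.
  intros Hu Huv. pose proof (exp_pos v).
  destruct (Rlt_or_le 0 u) as [Hpos | Hneg].
  - apply Rmult_gt_0_lt_compat; try apply exp_pos; try lra. apply exp_increasing. lra.
  - destruct (Req_dec u 0) as [-> | Hu0]; [rewrite Rmult_0_l; apply Rmult_lt_0_compat; lra|].
    (* [exp (u - v) > 1 + (u - v)], and [u (1 + u - v) <= v] because [u >= -1]. *)
    assert (Hineq : 1 + (u - v) < exp (u - v)) by (apply exp_ineq1; lra).
    replace (u * exp u) with (u * exp (u - v) * exp v)
      by (unfold Rminus; rewrite Rmult_assoc, <- exp_plus; f_equal; f_equal; ring).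
    apply Rmult_lt_compat_r; [lra|]. nra.
Qed.

Lemma mul_exp_inj u v : -1 <= u -> -1 <= v -> u * exp u = v * exp v -> u = v.
Proof.
  intros Hu Hv Heq.
  destruct (Rtotal_order u v) as [Hlt | [HE | Hgt]]; [| exact HE |].
  - pose proof (mul_exp_lt u v Hu Hlt). lra.
  - pose proof (mul_exp_lt v u Hv Hgt). lra.
Qed.

Lemma mul_exp_neg_lt s : s <> 1 -> s * exp (- s) < / exp 1.
Proof.
  intros Hs. rewrite <- exp_Ropp.
  assert (Hineq : 1 + (s - 1) < exp (s - 1)) by (apply exp_ineq1; lra).
  replace (exp (- (1))) with (exp (s - 1) * exp (- s)) by (rewrite <- exp_plus; f_equal; ring).
  apply Rmult_lt_compat_r; [apply exp_pos | lra].
Qed.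

(** * The tree function on [[0, 1/e]] *)

Lemma tree_mul_exp y : Rabs y < / exp 1 -> tree y * exp (- tree y) = y.
Proof. intros Hy. rewrite tree_eq, Rmult_assoc, tree_quot_mul_exp by exact Hy. ring. Qed.

Lemma tree_continuous y : Rabs y < / exp 1 -> continuity_pt tree y.
Proof.
  intros Hy. apply PSeries_continuity, tree_radius, Hy.
Qed.

Lemma tree_ge0 y : 0 <= y < / exp 1 -> 0 <= tree y.
Proof.
  intros Hy. assert (Hy' : Rabs y < / exp 1) by (rewrite Rabs_pos_eq; lra).
  pose proof (tree_quot_mul_exp y Hy'). pose proof (exp_pos (- (y * tree_quot y))).
  rewrite tree_eq. apply Rmult_le_pos; [lra | nra].
Qed.

Lemma tree_0 : tree 0 = 0.
Proof. unfold tree. rewrite PSeries_0. reflexivity. Qed.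

(* [T] is continuous, starts at [T 0 = 0], and can only reach [1] at [y = e^{-1}]. *)
Lemma tree_lt_1 y : 0 <= y < / exp 1 -> tree y < 1.
Proof.
  intros Hy.
  assert (Hdisk : forall t, 0 <= t <= y -> Rabs t < / exp 1)
    by (intros t Ht; rewrite Rabs_pos_eq; lra).
  assert (Hne1 : forall t, 0 <= t <= y -> tree t <> 1).
  { intros t Ht H1. pose proof (tree_mul_exp t (Hdisk t Ht)) as Hfix.
    rewrite H1, Rmult_1_l, exp_Ropp in Hfix. lra. }
  destruct (Rlt_or_le (tree y) 1) as [Hlt | Hge]; [exact Hlt | exfalso].
  destruct (Rle_lt_or_eq_dec 1 (tree y) Hge) as [Hgt | Heq]; [| apply (Hne1 y); lra].
  destruct (Req_dec y 0) as [Hy0 | Hy0].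
  { subst y. rewrite tree_0 in Hgt. lra. }
  destruct (Ranalysis5.IVT_interv (fun t => tree t - 1) 0 y) as [z [Hz Hz1]].
  - intros t Ht. apply continuity_pt_minus; [apply tree_continuous, Hdisk, Ht | apply continuity_pt_const].
    intros ? ?. reflexivity.
  - lra.
  - rewrite tree_0. lra.
  - lra.
  - apply (Hne1 z Hz). lra.
Qed.

Lemma tree_mul_exp_neg s : 0 <= s < 1 -> tree (s * exp (- s)) = s.
Proof.
  intros Hs. set (y := s * exp (- s)).
  assert (Hy : 0 <= y < / exp 1).
  { split; [apply Rmult_le_pos; [lra | left; apply exp_pos]|]. apply mul_exp_neg_lt. lra. }
  assert (Hy' : Rabs y < / exp 1) by (rewrite Rabs_pos_eq; lra).
  pose proof (tree_ge0 y Hy). pose proof (tree_lt_1 y Hy).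
  enough (- tree y = - s) by lra.
  apply mul_exp_inj; try lra.
  replace (- tree y * exp (- tree y)) with (- (tree y * exp (- tree y))) by ring.
  rewrite tree_mul_exp by exact Hy'. unfold y. ring.
Qed.

(** * The endpoint [y = 1/e] *)

Lemma le_of_left_limit (h : R -> R) a b c :
  a < b -> continuity_pt h b -> (forall s, a < s < b -> h s <= c) -> h b <= c.
Proof.
  intros Hab Hcont Hle. apply Rnot_lt_le. intros Hlt.
  destruct (Hcont (h b - c) ltac:(lra)) as [delta [Hdelta Hclose]].
  set (s := b - Rmin delta (b - a) / 2).
  assert (Hmin : 0 < Rmin delta (b - a)) by (apply Rmin_glb_lt; lra).
  assert (Hs : a < s < b) by (pose proof (Rmin_r delta (b - a)); unfold s; lra).
  assert (Hdist : Rabs (h s - h b) < h b - c).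
  { apply Hclose. split; [split; [exact I | lra]|].
    simpl. unfold R_dist. rewrite Rabs_left by lra.
    pose proof (Rmin_l delta (b - a)). unfold s. lra. }
  apply Rabs_def2 in Hdist. pose proof (Hle s Hs). lra.
Qed.

Lemma ex_series_le_of_left (c : nat -> R) x L :
  (forall k, 0 <= c k) -> 0 < x ->
  (forall y, 0 < y < x -> ex_series (fun k => c k * y ^ k) /\ Series (fun k => c k * y ^ k) <= L) ->
  ex_series (fun k => c k * x ^ k) /\ Series (fun k => c k * x ^ k) <= L.
Proof.
  intros Hc Hx Hle.
  assert (Hnn : forall k, 0 <= c k * x ^ k)
    by (intros k; apply Rmult_le_pos; [apply Hc | apply pow_le; lra]).
  assert (Hpart : forall N, sum_f_R0 (fun k => c k * x ^ k) N <= L).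
  { intros N. apply (le_of_left_limit (fun y => sum_f_R0 (fun k => c k * y ^ k) N) 0 x L Hx).
    - apply continuity_finite_sum.
    - intros y Hy. destruct (Hle y Hy) as [Hex HL].
      eapply Rle_trans; [|exact HL].
      apply sum_incr; [apply is_series_Reals, Series_correct, Hex|].
      intros k. apply Rmult_le_pos; [apply Hc | apply pow_le; lra]. }
  assert (Hex : ex_series (fun k => c k * x ^ k)).
  { destruct (growing_cv (fun n => sum_f_R0 (fun k => c k * x ^ k) n)) as [l Hl].
    - intros n. rewrite tech5. pose proof (Hnn (S n)). lra.
    - exists L. intros r [n ->]. apply Hpart.
    - exists l. apply is_series_Reals. exact Hl. }
  split; [exact Hex|].
  apply (is_lim_seq_le _ _ (Series (fun k => c k * x ^ k)) L Hpart); [|apply is_lim_seq_const].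
  apply is_lim_seq_Reals, is_series_Reals, Series_correct, Hex.
Qed.

Lemma PSeries_is_series (a : nat -> R) y :
  Rbar_lt (Rabs y) (CV_radius a) -> is_series (fun k => a k * y ^ k) (PSeries a y).
Proof. intros Hy. apply is_pseries_R, PSeries_correct, CV_radius_inside, Hy. Qed.

(* At [y = e^{-1}] the series is squeezed between the bound [h 1] inherited from [T < 1] and
   the values [h s] it takes at [y = s e^{-s}], [s < 1]. *)
Lemma is_series_at_inv_e (c : nat -> R) (h : R -> R) :
  (forall k, 0 <= c k) -> continuity_pt h 1 -> (forall s, 0 <= s < 1 -> h s <= h 1) ->
  (forall y, 0 <= y < / exp 1 -> is_series (fun k => c k * y ^ k) (h (tree y))) ->
  is_series (fun k => c k * (/ exp 1) ^ k) (h 1).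
Proof.
  intros Hc Hcont Hmono Hser.
  assert (He : 0 < / exp 1) by apply Rinv_0_lt_compat, exp_pos.
  destruct (ex_series_le_of_left c (/ exp 1) (h 1) Hc He) as [Hex Hup].
  { intros y Hy. pose proof (Hser y ltac:(lra)) as Hy_ser. split; [eexists; exact Hy_ser|].
    rewrite (is_series_unique _ _ Hy_ser). apply Hmono. split.
    - apply tree_ge0. lra.
    - apply tree_lt_1. lra. }
  assert (Hlow : h 1 <= Series (fun k => c k * (/ exp 1) ^ k)).
  { apply (le_of_left_limit h 0 1); [lra | exact Hcont |]. intros s Hs.
    assert (Hy : 0 <= s * exp (- s) < / exp 1).
    { split; [apply Rmult_le_pos; [lra | left; apply exp_pos] | apply mul_exp_neg_lt; lra]. }
    rewrite <- (tree_mul_exp_neg s) at 1 by lra.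
    rewrite <- (is_series_unique _ _ (Hser _ Hy)).
    apply Series_le; [|exact Hex]. intros n. split.
    - apply Rmult_le_pos; [apply Hc | apply pow_le; lra].
    - apply Rmult_le_compat_l; [apply Hc | apply pow_incr; lra]. }
  replace (h 1) with (Series (fun k => c k * (/ exp 1) ^ k)) by lra.
  apply Series_correct, Hex.
Qed.

Lemma PS_incr_1_ge0 (a : nat -> R) : (forall k, 0 <= a k) -> forall k, 0 <= PS_incr_1 a k.
Proof. intros Ha [|k]; [apply Rle_refl | apply Ha]. Qed.

Lemma is_series_tree y : Rabs y < / exp 1 ->
  is_series (fun k => PS_incr_1 tree_coef k * y ^ k) (tree y).
Proof. intros Hy. apply PSeries_is_series, tree_radius, Hy. Qed.

Lemma is_series_g_coef y : Rabs y < / exp 1 ->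
  is_series (fun k => PS_incr_1 g_coef k * y ^ k) (1 - exp (- tree y)).
Proof. intros Hy. rewrite <- g_series_eq by exact Hy. apply PSeries_is_series, g_coef_radius, Hy. Qed.

Lemma is_series_tree_inv_e : is_series (fun k => PS_incr_1 tree_coef k * (/ exp 1) ^ k) 1.
Proof.
  apply (is_series_at_inv_e _ (fun s => s)).
  - apply PS_incr_1_ge0. intros k. apply INR_pow_div_fact_ge0.
  - apply continuity_pt_id.
  - intros s Hs. lra.
  - intros y Hy. apply is_series_tree. rewrite Rabs_pos_eq; lra.
Qed.

Lemma is_series_g_coef_inv_e :
  is_series (fun k => PS_incr_1 g_coef k * (/ exp 1) ^ k) (1 - exp (- (1))).
Proof.
  apply (is_series_at_inv_e _ (fun s => 1 - exp (- s))).
  - apply PS_incr_1_ge0. intros k. apply g_coef_le_tree_coef.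
  - apply continuity_pt_filterlim, (ex_derive_continuous (fun s => 1 - exp (- s))).
    auto_derive. easy.
  - intros s Hs. assert (exp (- (1)) <= exp (- s)) by (apply exp_le; lra). lra.
  - intros y Hy. apply is_series_g_coef. rewrite Rabs_pos_eq; lra.
Qed.

Lemma tree_series y : 0 <= y <= / exp 1 ->
  exists s, 0 <= s <= 1 /\ s * exp (- s) = y /\
    is_series (fun k => PS_incr_1 tree_coef k * y ^ k) s /\
    is_series (fun k => PS_incr_1 g_coef k * y ^ k) (1 - exp (- s)).
Proof.
  intros Hy. destruct (Rle_lt_or_eq_dec _ _ (proj2 Hy)) as [Hlt | ->].
  - assert (Hdisk : Rabs y < / exp 1) by (rewrite Rabs_pos_eq; lra).
    exists (tree y). pose proof (tree_ge0 y). pose proof (tree_lt_1 y).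
    repeat split; try lra.
    + apply tree_mul_exp, Hdisk.
    + apply is_series_tree, Hdisk.
    + apply is_series_g_coef, Hdisk.
  - exists 1. repeat split; try lra.
    + rewrite Rmult_1_l, exp_Ropp. reflexivity.
    + apply is_series_tree_inv_e.
    + apply is_series_g_coef_inv_e.
Qed.

(** * Identification of [g] and [W0] *)

Lemma phi_exp u : phi (exp u) = - (u * exp u).
Proof. unfold phi. rewrite ln_exp. ring. Qed.

Lemma phi_bounds w : 0 <= w <= 1 -> 0 <= phi w <= / exp 1.
Proof.
  intros Hw. destruct (Rle_lt_or_eq_dec 0 w (proj1 Hw)) as [Hpos | <-].
  2:{ unfold phi. rewrite Ropp_0, Rmult_0_l. pose proof (exp_pos 1).
      split; [lra | left; apply Rinv_0_lt_compat; lra]. }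
  rewrite <- (exp_ln w), phi_exp by exact Hpos.
  assert (Hln : ln w <= 0) by (rewrite <- ln_1; apply ln_le; lra).
  pose proof (exp_pos (ln w)). split; [nra|].
  destruct (Req_dec (- ln w) 1) as [H1 | H1].
  - replace (ln w) with (- (1)) by lra. rewrite exp_Ropp. lra.
  - pose proof (mul_exp_neg_lt (- ln w) H1) as Hlt. rewrite Ropp_involutive in Hlt. lra.
Qed.

Lemma r_inv_eq x y : / exp 1 <= x <= 1 -> phi x = y -> r_inv y = x.
Proof.
  intros Hx Hxy. unfold r_inv, inv_on.
  destruct (epsilon_spec (inhabits 0) (fun x => / exp 1 <= x <= 1 /\ phi x = y)
              (ex_intro _ x (conj Hx Hxy))) as [Hx' Hx'y].
  set (x' := epsilon _ _) in *.
  assert (Hpos : 0 < / exp 1) by apply Rinv_0_lt_compat, exp_pos.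
  rewrite <- (exp_ln x), <- (exp_ln x') by lra. f_equal.
  apply mul_exp_inj; [apply ln_ge_neg1, Hx' | apply ln_ge_neg1, Hx |].
  rewrite <- (exp_ln x) in Hxy by lra. rewrite <- (exp_ln x') in Hx'y by lra.
  rewrite phi_exp in Hxy, Hx'y. lra.
Qed.

Lemma W0_eq u v : -1 <= u -> u * exp u = v -> W0 v = u.
Proof.
  intros Hu Huv. unfold W0.
  destruct (epsilon_spec (inhabits 0) (fun u => -1 <= u /\ u * exp u = v)
              (ex_intro _ u (conj Hu Huv))) as [Hu' Hu'v].
  apply mul_exp_inj; [exact Hu' | exact Hu | congruence].
Qed.

Lemma is_series_PS_incr_1 (a : nat -> R) y l :
  is_series (fun k => PS_incr_1 a k * y ^ k) l -> is_series (fun k => a k * y ^ S k) l.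
Proof.
  intros Hl. apply (is_series_incr_1 (fun k => PS_incr_1 a k * y ^ k)).
  simpl. unfold plus, zero. simpl. rewrite Rmult_0_l, Rplus_0_r. exact Hl.
Qed.

Lemma term_g_eq w k : term_g w k = g_coef k * phi w ^ S k.
Proof. unfold term_g, g_coef. replace (S k - 1)%nat with k by lia. reflexivity. Qed.

Lemma term_logg_eq w k : term_logg w k = - (tree_coef k * phi w ^ S k).
Proof.
  unfold term_logg, tree_coef, phi. replace (S k - 1)%nat with k by lia.
  replace (- INR (S k)) with (-1 * INR (S k)) by ring.
  replace (w * ln w) with (-1 * (- w * ln w)) by ring.
  rewrite (Rpow_mult_distr (-1) (INR (S k))), (Rpow_mult_distr (-1) (- w * ln w)).
  assert (Hsign : (-1) ^ k * (-1) ^ S k = -1).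
  { rewrite <- pow_add. replace (k + S k)%nat with (S (2 * k)) by lia. apply pow_1_odd. }
  transitivity ((-1) ^ k * (-1) ^ S k * (INR (S k) ^ k / INR (fact (S k)) * (- w * ln w) ^ S k));
    [unfold Rdiv; ring|].
  rewrite Hsign. ring.
Qed.

Lemma term_g_series w l : 0 <= phi w ->
  is_series (fun k => PS_incr_1 g_coef k * phi w ^ k) l ->
  is_series (term_g w) l /\ ex_series (fun k => Rabs (term_g w k)).
Proof.
  intros Hphi Hl. apply is_series_PS_incr_1 in Hl.
  assert (Hterms : forall k, g_coef k * phi w ^ S k = term_g w k)
    by (intros k; symmetry; apply term_g_eq).
  split; [exact (is_series_ext _ _ _ Hterms Hl)|].
  exists l. eapply is_series_ext; [|exact Hl]. intros k. cbv beta.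
  rewrite Hterms, Rabs_pos_eq; [reflexivity|]. rewrite <- Hterms.
  apply Rmult_le_pos; [apply g_coef_le_tree_coef | apply pow_le, Hphi].
Qed.

Lemma term_logg_series w l : 0 <= phi w ->
  is_series (fun k => PS_incr_1 tree_coef k * phi w ^ k) l ->
  is_series (term_logg w) (- l) /\ ex_series (fun k => Rabs (term_logg w k)).
Proof.
  intros Hphi Hl. apply is_series_PS_incr_1 in Hl.
  split.
  - eapply is_series_ext; [intros k; symmetry; apply term_logg_eq | apply (is_series_opp _ _ Hl)].
  - exists l. eapply is_series_ext; [|exact Hl]. intros k. cbv beta.
    rewrite term_logg_eq, Rabs_Ropp. symmetry. apply Rabs_pos_eq.
    apply Rmult_le_pos; [apply INR_pow_div_fact_ge0 | apply pow_le, Hphi].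
Qed.

Lemma g_W0_right w : / exp 1 <= w <= 1 -> Defs.g w = w /\ W0 (w * ln w) = ln w.
Proof.
  intros Hw. assert (Hw0 : 0 < w) by (pose proof (Rinv_0_lt_compat _ (exp_pos 1)); lra).
  split; [apply r_inv_eq; [exact Hw | reflexivity]|].
  apply W0_eq; [apply ln_ge_neg1, Hw | rewrite exp_ln by exact Hw0; ring].
Qed.

Theorem proposition10 (w : R) (hw : 0 <= w <= 1) :
  (ex_series (fun k => Rabs (term_g w k)) /\
   Defs.g w = 1 - Series (term_g w)) /\
  (ex_series (fun k => Rabs (term_logg w k)) /\
   ln (Defs.g w) = Series (term_logg w) /\
   Series (term_logg w) = W0 (w * ln w)) /\
  (w <= / exp 1 -> Defs.g w = Defs.f w) /\
  (/ exp 1 <= w -> Defs.g w = w /\ W0 (w * ln w) = ln w).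
Proof.
  destruct (tree_series (phi w) (phi_bounds w hw)) as [s [Hs [Hsy [HT HG]]]].
  pose proof (proj1 (phi_bounds w hw)) as Hphi.
  destruct (term_g_series w _ Hphi HG) as [Hg_series Hg_abs].
  destruct (term_logg_series w _ Hphi HT) as [Hlogg_series Hlogg_abs].
  rewrite (is_series_unique _ _ Hg_series), (is_series_unique _ _ Hlogg_series).
  assert (Hg : Defs.g w = exp (- s)).
  { apply r_inv_eq; [|rewrite phi_exp, <- Hsy; ring].
    rewrite <- exp_Ropp. split; [apply exp_le; lra | rewrite <- exp_0; apply exp_le; lra]. }
  assert (HW : W0 (w * ln w) = - s).
  { apply W0_eq; [lra|]. replace (w * ln w) with (- phi w) by (unfold phi; ring).
    rewrite <- Hsy. ring. }
  split; [split | split; [split; [|split] | split]].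
  - exact Hg_abs.
  - rewrite Hg. ring.
  - exact Hlogg_abs.
  - rewrite Hg, ln_exp. reflexivity.
  - symmetry. exact HW.
  - intros Hw. unfold Defs.f, Defs.g. destruct (Rle_dec w (/ exp 1)); [reflexivity | contradiction].
  - intros Hw. apply g_W0_right. lra.
Qed.
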